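(* Let $m\ge 2$, $\omega=e^{2\pi i/m}$, and $$d_n(q)=\sum_{0\le k\le n}(-1)^k q^{\binom k2}\prod_{k+1\le t\le n}[t]_q .$$ Let $c=\min\{1-\cos(2\pi j/m):1\le j\le m-1\}$. Then for every $n\ge m$ and every $1\le j\le m-1$, $$\left|d_n(\omega^j)\right|\le (m-1)\left(\frac{2}{c}\right)^{(m-2)/2}.$$ In particular $|d_n(\omega^j)|$ is bounded independently of $n$.
   Context: $[t]_q=1+q+\cdots+q^{t-1}$ for $t\ge 1$, and an empty product equals $1$. (The polynomial $d_n(q)$ is the generating function $\sum_{\pi}q^{\mathrm{maj}(\pi)}$ of the major index over derangements of $[n]$.) *)

From Stdlib Require Import Reals List Arith.
Open Scope R_scope.

Record Cplx := mkC { re : R; im : R }.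

Definition C0 : Cplx := mkC 0 0.
Definition C1 : Cplx := mkC 1 0.
Definition Cadd (z w : Cplx) : Cplx := mkC (re z + re w) (im z + im w).
Definition Cmul (z w : Cplx) : Cplx :=
  mkC (re z * re w - im z * im w) (re z * im w + im z * re w).
Definition Copp (z : Cplx) : Cplx := mkC (- re z) (- im z).
Fixpoint Cpow (z : Cplx) (n : nat) : Cplx :=
  match n with O => C1 | S n' => Cmul z (Cpow z n') end.
Definition Cnorm (z : Cplx) : R := sqrt (re z * re z + im z * im z).

Definition Csum (l : list Cplx) : Cplx := fold_right Cadd C0 l.
Definition Cprod (l : list Cplx) : Cplx := fold_right Cmul C1 l.

Definition qint (q : Cplx) (t : nat) : Cplx := Csum (map (Cpow q) (seq 0 t)).

Definition dpoly (n : nat) (q : Cplx) : Cplx :=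
  Csum (map (fun k =>
          Cmul (Cpow (Copp C1) k)
            (Cmul (Cpow q (k * (k - 1) / 2))
                  (Cprod (map (qint q) (seq (S k) (n - k))))))
       (seq 0 (S n))).

Definition omega (m : nat) : Cplx :=
  mkC (cos (2 * PI / INR m)) (sin (2 * PI / INR m)).

(* Let q = omega^j, a nontrivial m-th root of unity. Since (1 - q) [t]_q = 1 - q^t and
   |1 - q|^2 = 2 (1 - cos (2 pi j / m)) >= 2 c, every q-integer satisfies
   |[t]_q| <= 2 / |1 - q| <= sqrt (2 / c) =: x.  The alternating-sum formula gives the
   recurrence d_(k+1) = [k+1]_q d_k + (-1)^(k+1) q^(binom (k+1) 2).  At a positive
   multiple N of m we have [N]_q = 0 and [N+1]_q = 1, which forces d_(N+1) = 0, and
   |d_N| = 1.  From the zero at N + 1 the recurrence |d_(k+1)| <= x |d_k| + 1 yields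
   |d_(N+1+s)| <= s x^(s-1), and fewer than m steps separate n from the last multiple
   of m below it. *)
From Stdlib Require Import Reals List Arith Lra Lia.
(* After Reals, whose [C1] would otherwise shadow [Defs.C1]. *)
From Pilot Require Import Defs.
Open Scope R_scope.

Lemma Cplx_eq (z w : Cplx) : re z = re w -> im z = im w -> z = w.
Proof. destruct z, w; simpl; intros; now subst. Qed.

Definition Csub (z w : Cplx) : Cplx := Cadd z (Copp w).

Lemma Cring : ring_theory C0 C1 Cadd Cmul Csub Copp (@eq Cplx).
Proof.
  constructor; intros; apply Cplx_eq; unfold Csub, Cadd, Cmul, Copp, C0, C1; simpl; ring.
Qed.
Add Ring Cplx_ring : Cring.

Lemma Csum_app (l1 l2 : list Cplx) : Csum (l1 ++ l2) = Cadd (Csum l1) (Csum l2).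
Proof. induction l1 as [|z l1 IH]; simpl; [ring | rewrite IH; ring]. Qed.

Lemma Cprod_app (l1 l2 : list Cplx) : Cprod (l1 ++ l2) = Cmul (Cprod l1) (Cprod l2).
Proof. induction l1 as [|z l1 IH]; simpl; [ring | rewrite IH; ring]. Qed.

Lemma Csum_mulr (f : nat -> Cplx) (l : list nat) (c : Cplx) :
  Csum (map (fun k => Cmul (f k) c) l) = Cmul (Csum (map f l)) c.
Proof. induction l as [|k l IH]; simpl; [ring | rewrite IH; ring]. Qed.

Lemma Cpow_add (z : Cplx) (a b : nat) : Cpow z (a + b) = Cmul (Cpow z a) (Cpow z b).
Proof. induction a as [|a IH]; simpl; [ring | rewrite IH; ring]. Qed.

Lemma Cpow_mul (z : Cplx) (a b : nat) : Cpow z (a * b) = Cpow (Cpow z a) b.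
Proof.
  induction b as [|b IH]; simpl; [now rewrite Nat.mul_0_r|].
  rewrite Nat.mul_succ_r, Cpow_add, IH; ring.
Qed.

Lemma Cpow_C1 (k : nat) : Cpow C1 k = C1.
Proof. induction k as [|k IH]; simpl; [reflexivity | rewrite IH; ring]. Qed.

Lemma Cnorm_ge0 (z : Cplx) : 0 <= Cnorm z.
Proof. apply sqrt_pos. Qed.

Lemma Cnorm_C0 : Cnorm C0 = 0.
Proof. unfold Cnorm; simpl. replace (0 * 0 + 0 * 0) with 0 by ring. apply sqrt_0. Qed.

Lemma Cnorm_C1 : Cnorm C1 = 1.
Proof. unfold Cnorm; simpl. replace (1 * 1 + 0 * 0) with 1 by ring. apply sqrt_1. Qed.

Lemma Cnorm_opp (z : Cplx) : Cnorm (Copp z) = Cnorm z.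
Proof. unfold Cnorm; simpl. f_equal; ring. Qed.

Lemma Cnorm_eq0 (z : Cplx) : Cnorm z = 0 -> z = C0.
Proof.
  destruct z as [a b]; unfold Cnorm; simpl; intro H.
  apply sqrt_eq_0 in H; [|nra]. apply Cplx_eq; simpl; nra.
Qed.

Lemma Cnorm_mul (z w : Cplx) : Cnorm (Cmul z w) = Cnorm z * Cnorm w.
Proof.
  unfold Cnorm. rewrite <- sqrt_mult by (destruct z || destruct w; simpl; nra).
  f_equal. simpl. ring.
Qed.

Lemma Cnorm_pow (z : Cplx) (k : nat) : Cnorm (Cpow z k) = Cnorm z ^ k.
Proof.
  induction k as [|k IH]; simpl; [apply Cnorm_C1 | now rewrite Cnorm_mul, IH].
Qed.

Lemma Cnorm_add (z w : Cplx) : Cnorm (Cadd z w) <= Cnorm z + Cnorm w.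
Proof.
  destruct z as [a b], w as [c d]. unfold Cnorm; simpl.
  set (A := a * a + b * b). set (B := c * c + d * d).
  assert (HA : 0 <= A) by (unfold A; nra).
  assert (HB : 0 <= B) by (unfold B; nra).
  assert (Hcs : a * c + b * d <= sqrt (A * B)).
  { destruct (Rle_or_lt (a * c + b * d) 0) as [Hle | Hgt].
    - pose proof (sqrt_pos (A * B)); lra.
    - rewrite <- (sqrt_square (a * c + b * d)) by lra. apply sqrt_le_1_alt.
      unfold A, B. pose proof (Rle_0_sqr (a * d - b * c)). unfold Rsqr in *. nra. }
  apply Rsqr_incr_0_var; [| pose proof (sqrt_pos A); pose proof (sqrt_pos B); lra].
  unfold Rsqr. rewrite sqrt_sqrt by (pose proof (Rle_0_sqr (a + c)); pose proof (Rle_0_sqr (b + d));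
                                  unfold Rsqr in *; lra).
  replace ((sqrt A + sqrt B) * (sqrt A + sqrt B))
    with (sqrt A * sqrt A + sqrt B * sqrt B + 2 * (sqrt A * sqrt B)) by ring.
  rewrite !sqrt_sqrt, <- sqrt_mult by assumption.
  unfold A, B in *. nra.
Qed.

Lemma Cmul_eq0 (z w : Cplx) : Cmul z w = C0 -> z = C0 \/ w = C0.
Proof.
  intro H. apply (f_equal Cnorm) in H. rewrite Cnorm_mul, Cnorm_C0 in H.
  destruct (Rmult_integral _ _ H); [left | right]; now apply Cnorm_eq0.
Qed.

Definition cis (a : R) : Cplx := mkC (cos a) (sin a).

Lemma Cpow_cis (a : R) (k : nat) : Cpow (cis a) k = cis (INR k * a).
Proof.
  induction k as [|k IH].
  - unfold cis; simpl. now rewrite Rmult_0_l, cos_0, sin_0.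
  - rewrite S_INR. simpl Cpow. rewrite IH. unfold cis, Cmul; simpl.
    replace ((INR k + 1) * a) with (a + INR k * a) by ring.
    rewrite cos_plus, sin_plus. f_equal; ring.
Qed.

Lemma Cnorm_cis (a : R) : Cnorm (cis a) = 1.
Proof.
  unfold Cnorm, cis; simpl. rewrite <- sqrt_1. f_equal.
  pose proof (sin2_cos2 a). unfold Rsqr in *. lra.
Qed.

Lemma Cnorm_sub_cis (a : R) : Cnorm (Csub C1 (cis a)) = sqrt (2 * (1 - cos a)).
Proof.
  unfold Cnorm, Csub, cis; simpl. f_equal.
  pose proof (sin2_cos2 a). unfold Rsqr in *. nra.
Qed.

Lemma cos_root_unity_lt1 (m j : nat) :
  (1 <= j <= m - 1)%nat -> cos (2 * PI * INR j / INR m) < 1.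
Proof.
  intro Hj.
  assert (Hm : 0 < INR m) by (apply lt_0_INR; lia).
  assert (Hjm : INR j < INR m) by (apply lt_INR; lia).
  replace (2 * PI * INR j / INR m) with (2 * (PI * INR j / INR m)) by (field; lra).
  rewrite cos_2a_sin.
  enough (0 < sin (PI * INR j / INR m)) by nra.
  pose proof PI_RGT_0.
  assert (0 < INR j) by (apply lt_0_INR; lia).
  apply sin_gt_0.
  - apply Rdiv_lt_0_compat; [apply Rmult_lt_0_compat|]; lra.
  - apply Rmult_lt_reg_r with (INR m); [lra|].
    unfold Rdiv. rewrite Rmult_assoc, Rinv_l, Rmult_1_r by lra.
    apply Rmult_lt_compat_l; lra.
Qed.

Lemma qint_S (q : Cplx) (t : nat) : qint q (S t) = Cadd (qint q t) (Cpow q t).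
Proof. unfold qint. rewrite seq_S, map_app, Csum_app. simpl. ring. Qed.

Lemma qint_mul_sub1 (q : Cplx) (t : nat) :
  Cmul (qint q t) (Csub C1 q) = Csub C1 (Cpow q t).
Proof.
  induction t as [|t IH]; [unfold qint; simpl; ring|].
  rewrite qint_S. simpl Cpow.
  transitivity (Cadd (Cmul (qint q t) (Csub C1 q)) (Cmul (Cpow q t) (Csub C1 q)));
    [ring | rewrite IH; ring].
Qed.

Lemma qint_root_unity (q : Cplx) (N : nat) :
  q <> C1 -> Cpow q N = C1 -> qint q N = C0.
Proof.
  intros Hq1 HqN.
  pose proof (qint_mul_sub1 q N) as H. rewrite HqN in H.
  replace (Csub C1 C1) with C0 in H by ring.
  destruct (Cmul_eq0 _ _ H) as [Hz | Hz]; [assumption|].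
  exfalso. apply Hq1. transitivity (Cadd (Csub C1 q) q); [rewrite Hz|]; ring.
Qed.

Lemma Cnorm_qint_le (q : Cplx) (t : nat) :
  Cnorm q = 1 -> Cnorm (qint q t) * Cnorm (Csub C1 q) <= 2.
Proof.
  intro Hq. rewrite <- Cnorm_mul, qint_mul_sub1. unfold Csub.
  eapply Rle_trans; [apply Cnorm_add|].
  rewrite Cnorm_opp, Cnorm_pow, Hq, pow1, Cnorm_C1. lra.
Qed.

Lemma Cnorm_qint_cis_le (a c : R) (t : nat) :
  0 < c -> c <= 1 - cos a -> Cnorm (qint (cis a) t) <= sqrt (2 / c).
Proof.
  intros Hc Hca.
  assert (Hsub : sqrt (2 * c) <= Cnorm (Csub C1 (cis a)))
    by (rewrite Cnorm_sub_cis; apply sqrt_le_1_alt; lra).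
  assert (Hs : 0 < sqrt (2 * c)) by (apply sqrt_lt_R0; lra).
  assert (Hprod : sqrt (2 / c) * sqrt (2 * c) = 2).
  { rewrite <- sqrt_mult by (try apply Rlt_le, Rdiv_lt_0_compat; lra).
    replace (2 / c * (2 * c)) with (2 * 2) by (field; lra).
    apply sqrt_square; lra. }
  pose proof (Cnorm_qint_le (cis a) t (Cnorm_cis a)).
  pose proof (Cnorm_ge0 (qint (cis a) t)).
  apply Rmult_le_reg_r with (sqrt (2 * c)); [lra|]. nra.
Qed.

Lemma dpoly_S (n : nat) (q : Cplx) :
  dpoly (S n) q =
  Cadd (Cmul (dpoly n q) (qint q (S n)))
       (Cmul (Cpow (Copp C1) (S n)) (Cpow q (S n * n / 2))).
Proof.
  unfold dpoly. rewrite (seq_S (S n) 0), map_app, Csum_app.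
  cbn [map]. unfold Csum at 2. cbn [fold_right].
  replace (0 + S n)%nat with (S n) by lia.
  replace (S n - S n)%nat with 0%nat by lia.
  replace (S n * (S n - 1))%nat with (S n * n)%nat by (f_equal; lia).
  change (seq (S (S n)) 0) with (@nil nat).
  cbn [map]. unfold Cprod at 2. cbn [fold_right].
  rewrite <- Csum_mulr. f_equal; [|ring]. f_equal.
  apply map_ext_in. intros k Hk. apply in_seq in Hk.
  replace (S n - k)%nat with (S (n - k)) by lia.
  rewrite seq_S, map_app, Cprod_app.
  replace (S k + (n - k))%nat with (S n) by lia.
  cbn [map]. unfold Cprod at 2. cbn [fold_right]. ring.
Qed.

Section RootOfUnity.

Variables (q : Cplx) (N : nat).
Hypotheses (HqN : Cpow q (S N) = C1) (Hq1 : q <> C1).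

Let qint_N : qint q (S N) = C0 := qint_root_unity q (S N) Hq1 HqN.

Lemma dpoly_root_unity :
  dpoly (S N) q = Cmul (Cpow (Copp C1) (S N)) (Cpow q (S N * N / 2)).
Proof. rewrite dpoly_S, qint_N. ring. Qed.

(* [N+2]_q = [N+1]_q + q^(N+1) = 1 and q^(binom (N+2) 2) = q^(binom (N+1) 2) q^(N+1),
   so the two terms of the recurrence cancel. *)
Lemma dpoly_root_unity_S : dpoly (S (S N)) q = C0.
Proof.
  assert (Hbinom : (S (S N) * S N / 2 = S N * N / 2 + S N)%nat).
  { replace (S (S N) * S N)%nat with (S N * N + S N * 2)%nat by ring.
    apply Nat.div_add; lia. }
  rewrite dpoly_S, qint_S, dpoly_root_unity, qint_N, HqN, Hbinom, Cpow_add, HqN.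
  simpl Cpow. ring.
Qed.

End RootOfUnity.

Section UnitCircle.

Variables (q : Cplx) (x : R).
Hypotheses (Hq : Cnorm q = 1) (Hx : 1 <= x) (Hqint : forall t, Cnorm (qint q t) <= x).

Lemma Cnorm_dpoly_S_le (k : nat) :
  Cnorm (dpoly (S k) q) <= Cnorm (dpoly k q) * x + 1.
Proof.
  rewrite dpoly_S. eapply Rle_trans; [apply Cnorm_add|].
  rewrite !Cnorm_mul, !Cnorm_pow, Cnorm_opp, Cnorm_C1, Hq, !pow1.
  pose proof (Cnorm_ge0 (dpoly k q)). pose proof (Hqint (S k)). nra.
Qed.

Lemma Cnorm_dpoly_from_zero (N s : nat) :
  dpoly N q = C0 -> Cnorm (dpoly (N + s) q) <= INR s * x ^ (s - 1).
Proof.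
  intro HN. induction s as [|s IH].
  - rewrite Nat.add_0_r, HN, Cnorm_C0. simpl. lra.
  - rewrite Nat.add_succ_r. eapply Rle_trans; [apply Cnorm_dpoly_S_le|].
    rewrite S_INR. destruct s as [|s].
    + rewrite Nat.add_0_r, HN, Cnorm_C0. simpl. lra.
    + replace (S s - 1)%nat with s in IH by lia.
      replace (S (S s) - 1)%nat with (S s) by lia.
      simpl pow. pose proof (pow_R1_Rle x s Hx). pose proof (pos_INR (S s)). nra.
Qed.

Lemma Cnorm_dpoly_root_unity_le (m n : nat) :
  (2 <= m)%nat -> (m <= n)%nat -> Cpow q m = C1 -> q <> C1 ->
  Cnorm (dpoly n q) <= (INR m - 1) * x ^ (m - 2).
Proof.
  intros Hm Hmn Hqm Hq1.
  assert (Hm1 : 1 <= INR m - 1) by (apply le_INR in Hm; simpl in Hm; lra).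
  assert (Hmul : Cpow q (m * (n / m)) = C1) by (now rewrite Cpow_mul, Hqm, Cpow_C1).
  assert (Hdiv : (1 <= n / m)%nat) by (apply Nat.div_le_lower_bound; lia).
  pose proof (Nat.div_mod n m ltac:(lia)) as Hn.
  pose proof (Nat.mod_upper_bound n m ltac:(lia)) as Hs.
  destruct (m * (n / m))%nat as [|N] eqn:EN; [nia|].
  destruct (n mod m) as [|s] eqn:Es; rewrite Hn.
  - rewrite Nat.add_0_r, dpoly_root_unity, Cnorm_mul, !Cnorm_pow, Cnorm_opp, Cnorm_C1, Hq, !pow1
      by assumption.
    pose proof (pow_R1_Rle x (m - 2) Hx). nra.
  - replace (S N + S s)%nat with (S (S N) + s)%nat by lia.
    eapply Rle_trans; [apply Cnorm_dpoly_from_zero, dpoly_root_unity_S; assumption|].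
    assert (INR s <= INR m - 1)
      by (change 1 with (INR 1); rewrite <- minus_INR by lia; apply le_INR; lia).
    apply Rmult_le_compat; [apply pos_INR | apply pow_le; lra | lra |].
    apply Rle_pow; [lra | lia].
Qed.

End UnitCircle.

Lemma Rpower_sqrt_pow (a : R) (k : nat) : 0 < a -> Rpower a (INR k / 2) = sqrt a ^ k.
Proof.
  intro Ha. replace (INR k / 2) with (/ 2 * INR k) by field.
  rewrite <- Rpower_mult, Rpower_sqrt, Rpower_pow by (try apply sqrt_lt_R0; lra).
  reflexivity.
Qed.

Theorem mainTheorem3 (m : nat) (Hm : (2 <= m)%nat) (c : R)
  (Hc_lb : forall j : nat, (1 <= j <= m - 1)%nat ->
             c <= 1 - cos (2 * PI * INR j / INR m))
  (Hc_att : exists j : nat, (1 <= j <= m - 1)%nat /\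
             c = 1 - cos (2 * PI * INR j / INR m)) :
  forall n j : nat, (m <= n)%nat -> (1 <= j <= m - 1)%nat ->
    Cnorm (dpoly n (Cpow (omega m) j))
      <= (INR m - 1) * Rpower (2 / c) ((INR m - 2) / 2).
Proof.
  intros n j Hn Hj.
  assert (Hm0 : 0 < INR m) by (apply lt_0_INR; lia).
  assert (Hc : 0 < c)
    by (destruct Hc_att as [j0 [Hj0 ->]]; pose proof (cos_root_unity_lt1 m j0 Hj0); lra).
  set (a := 2 * PI * INR j / INR m).
  assert (Hq : Cpow (omega m) j = cis a)
    by (unfold omega; fold (cis (2 * PI / INR m)); rewrite Cpow_cis; unfold a;
        f_equal; field; lra).
  assert (Hqm : Cpow (cis a) m = C1).
  { rewrite Cpow_cis. replace (INR m * a) with (0 + 2 * INR j * PI) by (unfold a; field; lra).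
    unfold cis. now rewrite cos_period, sin_period, cos_0, sin_0. }
  assert (Hq1 : cis a <> C1)
    by (intro H; apply (f_equal re) in H; simpl in H; unfold a in H;
        pose proof (cos_root_unity_lt1 m j Hj); lra).
  assert (Hx : 1 <= sqrt (2 / c)).
  { pose proof (Hc_lb j Hj) as Hca. fold a in Hca. pose proof (COS_bound a).
    rewrite <- sqrt_1. apply sqrt_le_1_alt.
    apply Rmult_le_reg_r with c; [lra|]. unfold Rdiv. rewrite Rmult_assoc, Rinv_l; lra. }
  replace ((INR m - 2) / 2) with (INR (m - 2) / 2) by (rewrite minus_INR by lia; reflexivity).
  rewrite Hq, Rpower_sqrt_pow by (apply Rdiv_lt_0_compat; lra).
  apply Cnorm_dpoly_root_unity_le; try assumption.
  - apply Cnorm_cis.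
  - intro t. apply Cnorm_qint_cis_le; [assumption | apply Hc_lb, Hj].
Qed.
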